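(* For every $\phi\in\mathcal{L}_{\Box\!\!\rightarrow}$ and every $(\Gamma,\Delta)\in W_c$: (1) $\mathcal{M}_c,(\Gamma,\Delta)\models^+\phi$ iff $\phi\in\Gamma$; (2) $\mathcal{M}_c,(\Gamma,\Delta)\models^-\phi$ iff $\sim\phi\in\Gamma$.
   Context: $\mathcal{L}_{\Box\!\!\rightarrow}$ is built from propositional variables with $\wedge,\vee,\to$, strong negation $\sim$, and a binary would-conditional $\Box\!\!\rightarrow$; $\phi\Diamond\!\!\rightarrow\psi$ abbreviates $\sim(\phi\Box\!\!\rightarrow\sim\psi)$. Abbreviations: $\leftrightarrow$ is mutual $\to$; $\phi\Rightarrow\psi:=(\phi\to\psi)\wedge(\sim\psi\to\sim\phi)$; $\phi\Leftrightarrow\psi:=(\phi\Rightarrow\psi)\wedge(\psi\Rightarrow\phi)$. $\mathbb{N}4\mathbb{CK}$: modus ponens; positive intuitionistic schemes; $\sim\sim\phi\leftrightarrow\phi$, $\sim(\phi\wedge\psi)\leftrightarrow(\sim\phi\vee\sim\psi)$, $\sim(\phi\vee\psi)\leftrightarrow(\sim\phi\wedge\sim\psi)$, $\sim(\phi\to\psi)\leftrightarrow(\phi\wedge\sim\psi)$; (A1) $((\phi\Box\!\!\rightarrow\psi)\wedge(\phi\Box\!\!\rightarrow\chi))\Leftrightarrow(\phi\Box\!\!\rightarrow(\psi\wedge\chi))$; (A2) $(\sim(\phi\Box\!\!\rightarrow\psi)\wedge(\phi\Box\!\!\rightarrow\chi))\to\sim(\phi\Box\!\!\rightarrow(\psi\vee\sim\chi))$;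 (A3) $((\phi\Diamond\!\!\rightarrow\psi)\to(\phi\Box\!\!\rightarrow\chi))\to(\phi\Box\!\!\rightarrow(\psi\to\chi))$; (A4) $\phi\Box\!\!\rightarrow(\psi\to\psi)$; rules: from $\phi\Leftrightarrow\psi$ infer $(\phi\Box\!\!\rightarrow\chi)\Leftrightarrow(\psi\Box\!\!\rightarrow\chi)$; from $\phi\leftrightarrow\psi$ infer $(\chi\Box\!\!\rightarrow\phi)\leftrightarrow(\chi\Box\!\!\rightarrow\psi)$; from $\sim\phi\leftrightarrow\sim\psi$ infer $\sim(\chi\Box\!\!\rightarrow\phi)\leftrightarrow\sim(\chi\Box\!\!\rightarrow\psi)$. $\Gamma\vdash\Delta$ means some nonempty finite disjunction of members of $\Delta$ is derivable from $\Gamma$ and theorems by modus ponens; $(\Gamma,\Delta)$ is maximal iff $\Gamma\not\vdash\Delta$ and $\Gamma\cup\Delta=\mathcal{L}_{\Box\!\!\rightarrow}$. Canonical model $\mathcal{M}_c$: $W_c$ = maximal bi-sets; $(\Gamma_0,\Delta_0)\leq_c(\Gamma_1,\Delta_1)$ iff $\Gamma_0\subseteq\Gamma_1$; $((\Gamma_0,\Delta_0),(X,Y),(\Gamma_1,\Delta_1))\in R_c$ iff for some $\phi$: $X=\{(\Gamma,\Delta)\in W_c\mid\phi\in\Gamma\}$, $Y=\{(\Gamma,\Delta)\in W_c\mid\sim\phi\in\Gamma\}$, $\{\psi\mid\phi\Box\!\!\rightarrow\psi\in\Gamma_0\}\subseteq\Gamma_1$, $\{\sim(\phi\Box\!\!\rightarrow\psi)\mid\sim\psi\in\Gamma_1\}\subseteq\Gamma_0$;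 $V^+_c(p)=\{(\Gamma,\Delta)\mid p\in\Gamma\}$, $V^-_c(p)=\{(\Gamma,\Delta)\mid\sim p\in\Gamma\}$. Verification $\models^+$ / falsification $\models^-$: atoms by $V^\pm$; $\wedge$ verified iff both verified, falsified iff one falsified; $\vee$ dually; $\sim$ swaps $\models^+,\models^-$; $w\models^+\psi\to\chi$ iff for all $v\geq w$, $v\models^+\psi$ implies $v\models^+\chi$; $w\models^-\psi\to\chi$ iff $w\models^+\psi$ and $w\models^-\chi$; $w\models^+\psi\Box\!\!\rightarrow\chi$ iff for all $v\geq w$ and $u$ with $R_{\|\psi\|}(v,u)$, $u\models^+\chi$; $w\models^-\psi\Box\!\!\rightarrow\chi$ iff some $u$ has $R_{\|\psi\|}(w,u)$ and $u\models^-\chi$, where $\|\psi\|=(\{w\mid w\models^+\psi\},\{w\mid w\models^-\psi\})$. *)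

From Stdlib Require Import List.
Import ListNotations.

Inductive form : Type :=
| Var  : nat -> form
| And  : form -> form -> form
| Or   : form -> form -> form
| Imp  : form -> form -> form
| Neg  : form -> form              (* strong negation ~ *)
| Cond : form -> form -> form.

Definition Dia (p q : form) : form := Neg (Cond p (Neg q)).
Definition Iff (p q : form) : form := And (Imp p q) (Imp q p).
Definition SImp (p q : form) : form := And (Imp p q) (Imp (Neg q) (Neg p)).
Definition SIff (p q : form) : form := And (SImp p q) (SImp q p).

Inductive thm : form -> Prop :=
| ax_K  : forall p q, thm (Imp p (Imp q p))
| ax_S  : forall p q r, thm (Imp (Imp p (Imp q r)) (Imp (Imp p q) (Imp p r)))
| ax_A1 : forall p q, thm (Imp (And p q) p)
| ax_A2 : forall p q, thm (Imp (And p q) q)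
| ax_A3 : forall p q, thm (Imp p (Imp q (And p q)))
| ax_O1 : forall p q, thm (Imp p (Or p q))
| ax_O2 : forall p q, thm (Imp q (Or p q))
| ax_O3 : forall p q r, thm (Imp (Imp p r) (Imp (Imp q r) (Imp (Or p q) r)))
| ax_NN   : forall p, thm (Iff (Neg (Neg p)) p)
| ax_NAnd : forall p q, thm (Iff (Neg (And p q)) (Or (Neg p) (Neg q)))
| ax_NOr  : forall p q, thm (Iff (Neg (Or p q)) (And (Neg p) (Neg q)))
| ax_NImp : forall p q, thm (Iff (Neg (Imp p q)) (And p (Neg q)))
| ax_C1 : forall p q r,
    thm (SIff (And (Cond p q) (Cond p r)) (Cond p (And q r)))
| ax_C2 : forall p q r,
    thm (Imp (And (Neg (Cond p q)) (Cond p r)) (Neg (Cond p (Or q (Neg r)))))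
| ax_C3 : forall p q r,
    thm (Imp (Imp (Dia p q) (Cond p r)) (Cond p (Imp q r)))
| ax_C4 : forall p q, thm (Cond p (Imp q q))
| r_MP : forall p q, thm (Imp p q) -> thm p -> thm q
| r_RA : forall p q r, thm (SIff p q) -> thm (SIff (Cond p r) (Cond q r))
| r_RC : forall p q r, thm (Iff p q) -> thm (Iff (Cond r p) (Cond r q))
| r_RCN : forall p q r, thm (Iff (Neg p) (Neg q)) ->
                        thm (Iff (Neg (Cond r p)) (Neg (Cond r q))).

Inductive deriv (G : form -> Prop) : form -> Prop :=
| d_hyp : forall p, G p -> deriv G p
| d_thm : forall p, thm p -> deriv G p
| d_mp  : forall p q, deriv G (Imp p q) -> deriv G p -> deriv G q.

Fixpoint bigOr (x : form) (l : list form) : form :=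
  match l with
  | [] => x
  | y :: l' => Or x (bigOr y l')
  end.

Definition seq_deriv (G D : form -> Prop) : Prop :=
  exists (x : form) (l : list form),
    (forall y, In y (x :: l) -> D y) /\ deriv G (bigOr x l).

Definition maximal (GD : (form -> Prop) * (form -> Prop)) : Prop :=
  ~ seq_deriv (fst GD) (snd GD) /\ (forall p, fst GD p \/ snd GD p).

Record model : Type := Model {
  W  : Type;
  le : W -> W -> Prop;
  R  : W -> (W -> Prop) * (W -> Prop) -> W -> Prop;
  Vp : nat -> W -> Prop;
  Vm : nat -> W -> Prop
}.

Fixpoint ver (M : model) (p : form) (w : W M) {struct p} : Prop :=
  match p with
  | Var n => Vp M n w
  | And a b => ver M a w /\ ver M b w
  | Or a b => ver M a w \/ ver M b w
  | Imp a b => forall v, le M w v -> ver M a v -> ver M b v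
  | Neg a => fal M a w
  | Cond a b => forall v, le M w v ->
                forall u, R M v (ver M a, fal M a) u -> ver M b u
  end
with fal (M : model) (p : form) (w : W M) {struct p} : Prop :=
  match p with
  | Var n => Vm M n w
  | And a b => fal M a w \/ fal M b w
  | Or a b => fal M a w /\ fal M b w
  | Imp a b => ver M a w /\ fal M b w
  | Neg a => ver M a w
  | Cond a b => exists u, R M w (ver M a, fal M a) u /\ fal M b u
  end.

Definition Wc : Type := { GD : (form -> Prop) * (form -> Prop) | maximal GD }.

Definition Gam (w : Wc) : form -> Prop := fst (proj1_sig w).

Definition lec (w v : Wc) : Prop := forall p, Gam w p -> Gam v p.

(* set equality X = {w | ...} rendered extensionally (pointwise iff) *)
Definition Rc (w0 : Wc) (XY : (Wc -> Prop) * (Wc -> Prop)) (w1 : Wc) : Prop :=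
  exists p : form,
    (forall w, fst XY w <-> Gam w p) /\
    (forall w, snd XY w <-> Gam w (Neg p)) /\
    (forall q, Gam w0 (Cond p q) -> Gam w1 q) /\
    (forall q, Gam w1 (Neg q) -> Gam w0 (Neg (Cond p q))).

Definition Mc : model :=
  Model Wc lec Rc (fun n w => Gam w (Var n)) (fun n w => Gam w (Neg (Var n))).

From Stdlib Require Import List Classical ClassicalEpsilon Cantor Lia.
Import ListNotations.

(* Maximal pairs are prime, deductively closed theories, so the
   propositional clauses are matched by primeness and the strong-negation
   axioms. For the conditional the crux is that, once the lemma holds for a,
   any p whose verification and falsification sets are those of a is
   provably strongly equivalent to a (a maximal pair separates every
   non-theorem), so rule RA lets the canonical relation along ||a|| be read
   off a itself. The successors demanded by the semantics then come from
   Lindenbaum's lemma: for a failed a []-> b first the successor u and then a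
   world above w seeing u, consistent thanks to C3; for a falsified
   conditional a successor whose consistency rests on C1 and C2. *)

Lemma thm_id p : thm (Imp p p).
Proof. exact (r_MP _ _ (r_MP _ _ (ax_S p (Imp p p) p) (ax_K p (Imp p p))) (ax_K p p)). Qed.

Lemma thm_and p q : thm p -> thm q -> thm (And p q).
Proof. intros Hp Hq. exact (r_MP _ _ (r_MP _ _ (ax_A3 p q) Hp) Hq). Qed.

Lemma thm_and_elim p q : thm (And p q) -> thm p /\ thm q.
Proof. intro H. exact (conj (r_MP _ _ (ax_A1 p q) H) (r_MP _ _ (ax_A2 p q) H)). Qed.

Lemma deriv_mono (G G' : form -> Prop) p :
  (forall x, G x -> G' x) -> deriv G p -> deriv G' p.
Proof. intros HG H; induction H; [apply d_hyp | apply d_thm | eapply d_mp]; eauto. Qed.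

Lemma deriv_deduction G h p : deriv (fun q => G q \/ q = h) p -> deriv G (Imp h p).
Proof.
  induction 1 as [p [Hp | ->] | p Hp | p q _ IH1 _ IH2].
  - exact (d_mp _ _ _ (d_thm _ _ (ax_K p h)) (d_hyp _ _ Hp)).
  - apply d_thm, thm_id.
  - exact (d_mp _ _ _ (d_thm _ _ (ax_K p h)) (d_thm _ _ Hp)).
  - exact (d_mp _ _ _ (d_mp _ _ _ (d_thm _ _ (ax_S h p q)) IH1) IH2).
Qed.

Lemma thm_of_deriv_empty p : deriv (fun _ => False) p -> thm p.
Proof. induction 1; [contradiction | assumption | eapply r_MP; eassumption]. Qed.

Lemma thm_imp_of_deriv a b : deriv (fun q => q = a) b -> thm (Imp a b).
Proof.
  intro H. apply thm_of_deriv_empty, deriv_deduction.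
  revert H; apply deriv_mono; auto.
Qed.

Lemma deriv_finite_support (G N : form -> Prop) p :
  deriv (fun q => G q \/ N q) p ->
  exists hs, (forall h, In h hs -> N h) /\ deriv (fun q => G q \/ In q hs) p.
Proof.
  induction 1 as [p [Hp | Hp] | p Hp | p q _ [h1 [Hh1 D1]] _ [h2 [Hh2 D2]]].
  - exists []. split; [intros _ [] | apply d_hyp; auto].
  - exists [p]. split; [intros h [<- | []]; auto | apply d_hyp; simpl; auto].
  - exists []. split; [intros _ [] | apply d_thm; auto].
  - exists (h1 ++ h2). split.
    + intros h Hh; apply in_app_iff in Hh; destruct Hh; auto.
    + apply (d_mp _ p); [revert D1 | revert D2]; apply deriv_mono;
        intros x [Hx | Hx]; rewrite ?in_app_iff; auto.
Qed.

Section DerivedRules.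
Variable G : form -> Prop.

Lemma deriv_thm_mp p q : thm (Imp p q) -> deriv G p -> deriv G q.
Proof. intro H; apply d_mp, d_thm, H. Qed.

Lemma deriv_and p q : deriv G p -> deriv G q -> deriv G (And p q).
Proof. intros Hp Hq. exact (d_mp _ _ _ (deriv_thm_mp _ _ (ax_A3 p q) Hp) Hq). Qed.

Lemma deriv_imp_trans a b c :
  deriv G (Imp a b) -> deriv G (Imp b c) -> deriv G (Imp a c).
Proof.
  intros Hab Hbc. apply deriv_deduction.
  apply (d_mp _ b); [revert Hbc | apply (d_mp _ a); [revert Hab | apply d_hyp; auto]];
    apply deriv_mono; auto.
Qed.

Lemma deriv_or_elim a b c :
  deriv G (Imp a c) -> deriv G (Imp b c) -> deriv G (Imp (Or a b) c).
Proof. intros Ha Hb. exact (d_mp _ _ _ (d_mp _ _ _ (d_thm _ _ (ax_O3 a b c)) Ha) Hb). Qed.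

End DerivedRules.

Lemma thm_trans a b c : thm (Imp a b) -> thm (Imp b c) -> thm (Imp a c).
Proof. intros Hab Hbc. apply thm_of_deriv_empty, (deriv_imp_trans _ _ b); apply d_thm; auto. Qed.

Lemma bigOr_intro z x l : In z (x :: l) -> thm (Imp z (bigOr x l)).
Proof.
  revert x; induction l as [| y l IH]; intros x [<- | Hz]; simpl.
  - apply thm_id.
  - destruct Hz.
  - apply ax_O1.
  - exact (thm_trans _ _ _ (IH y Hz) (ax_O2 x _)).
Qed.

Lemma deriv_bigOr_elim G x l c :
  (forall z, In z (x :: l) -> deriv G (Imp z c)) -> deriv G (Imp (bigOr x l) c).
Proof.
  revert x; induction l as [| y l IH]; intros x Hc; simpl.
  - apply Hc; left; auto.
  - apply deriv_or_elim; [apply Hc; left | apply IH; intros; apply Hc; right]; auto.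
Qed.

Lemma bigOr_sub x l y m :
  (forall z, In z (x :: l) -> In z (y :: m)) -> thm (Imp (bigOr x l) (bigOr y m)).
Proof.
  intro Hsub. apply thm_of_deriv_empty, deriv_bigOr_elim.
  intros z Hz. apply d_thm, bigOr_intro, Hsub, Hz.
Qed.

Lemma list_cover {A : Type} (P : A -> Prop) (e : A) (m : list A) :
  (forall z, In z m -> P z \/ z = e) ->
  exists k, (forall z, In z k -> P z) /\ (forall z, In z m -> In z k \/ z = e).
Proof.
  induction m as [| z m IH]; intro Hm.
  - exists []. split; intros _ [].
  - destruct IH as [k [Hk Hc]]; [intros; apply Hm; right; auto |].
    destruct (Hm z (or_introl eq_refl)) as [Hz | ->].
    + exists (z :: k). split.
      * intros y [<- | Hy]; auto.
      * intros y [<- | Hy]; [left; left; auto | destruct (Hc y Hy); simpl; auto].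
    + exists k. split; auto. intros y [<- | Hy]; auto.
Qed.

Lemma seq_deriv_cut G D e :
  seq_deriv (fun q => G q \/ q = e) D -> seq_deriv G (fun q => D q \/ q = e) ->
  seq_deriv G D.
Proof.
  intros [x [l [Hxl Hd]]] [y [m [Hym Hd']]].
  apply deriv_deduction in Hd.
  destruct (list_cover D e (y :: m) Hym) as [k [Hk Hcov]].
  exists x, (l ++ k). split.
  - intros z [<- | Hz]; [apply Hxl; left; auto |].
    apply in_app_iff in Hz as [Hz | Hz]; [apply Hxl; right |]; auto.
  - refine (d_mp _ _ _ (deriv_bigOr_elim _ _ _ _ _) Hd'). intros z Hz.
    destruct (Hcov z Hz) as [Hzk | ->].
    + apply d_thm, bigOr_intro. right. apply in_app_iff; auto.
    + apply (deriv_imp_trans _ _ _ _ Hd), d_thm, bigOr_sub.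
      intros z [<- | Hz']; [left | right; apply in_app_iff]; auto.
Qed.

Definition or_directed (D : form -> Prop) : Prop :=
  forall y1 y2, D y1 -> D y2 -> exists z, D z /\ thm (Imp (Or y1 y2) z).

Lemma seq_deriv_or_directed G D :
  or_directed D -> seq_deriv G D -> exists z, D z /\ deriv G z.
Proof.
  intros HD [x [l [Hl Hd]]].
  enough (H : exists z, D z /\ thm (Imp (bigOr x l) z)).
  { destruct H as [z [Hz Ht]]. exists z. split; [exact Hz | exact (deriv_thm_mp _ _ _ Ht Hd)]. }
  clear Hd. revert x Hl; induction l as [| y l IH]; intros x Hl.
  - exists x. split; [apply Hl; left; auto | apply thm_id].
  - destruct (IH y) as [z' [Hz' Ht']]; [intros; apply Hl; right; auto |].
    destruct (HD x z') as [z [Hz Ht]]; [apply Hl; left; auto | exact Hz' |].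
    exists z. split; [exact Hz |]. simpl. apply thm_of_deriv_empty.
    apply deriv_or_elim; apply (deriv_imp_trans _ _ (Or x z')); apply d_thm; auto.
    + apply ax_O1.
    + exact (thm_trans _ _ _ Ht' (ax_O2 x z')).
Qed.

Lemma seq_deriv_single G b : seq_deriv G (fun q => q = b) -> deriv G b.
Proof.
  intro Hs.
  assert (Hb : or_directed (fun q => q = b)).
  { intros y1 y2 -> ->. exists b. split; [reflexivity |].
    apply thm_of_deriv_empty, deriv_or_elim; apply d_thm, thm_id. }
  destruct (seq_deriv_or_directed G _ Hb Hs) as [z [-> Hz]]. exact Hz.
Qed.

Definition Del (w : Wc) : form -> Prop := snd (proj1_sig w).

Lemma Gam_consistent (w : Wc) : ~ seq_deriv (Gam w) (Del w).
Proof. exact (proj1 (proj2_sig w)). Qed.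

Lemma Del_iff_not_Gam w p : Del w p <-> ~ Gam w p.
Proof.
  split.
  - intros HD HG. apply (Gam_consistent w). exists p, [].
    split; [intros y [<- | []]; exact HD | apply d_hyp, HG].
  - intro HG. destruct (proj2 (proj2_sig w) p); [contradiction | assumption].
Qed.

Lemma Gam_closed w p : deriv (Gam w) p -> Gam w p.
Proof.
  intro H. apply NNPP; intro Hn. apply (Gam_consistent w). exists p, [].
  split; [intros y [<- | []]; apply Del_iff_not_Gam, Hn | exact H].
Qed.

Lemma Gam_prime w a b : Gam w (Or a b) -> Gam w a \/ Gam w b.
Proof.
  intro H. apply NNPP; intro Hn. apply (Gam_consistent w). exists a, [b].
  split; [intros y [<- | [<- | []]]; apply Del_iff_not_Gam; tauto | apply d_hyp, H].
Qed.

Lemma Gam_thm w p : thm p -> Gam w p.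
Proof. intro H; apply Gam_closed, d_thm, H. Qed.

Lemma Gam_thm_mp w a b : thm (Imp a b) -> Gam w a -> Gam w b.
Proof. intros Hab Ha. apply Gam_closed, (deriv_thm_mp _ _ _ Hab), d_hyp, Ha. Qed.

Lemma Gam_mp w a b : Gam w (Imp a b) -> Gam w a -> Gam w b.
Proof. intros Hab Ha. apply Gam_closed, (d_mp _ a); apply d_hyp; assumption. Qed.

Lemma Gam_iff w a b : thm (Iff a b) -> (Gam w a <-> Gam w b).
Proof. intro H. destruct (thm_and_elim _ _ H). split; apply Gam_thm_mp; assumption. Qed.

Lemma Gam_and w a b : Gam w (And a b) <-> Gam w a /\ Gam w b.
Proof.
  split.
  - intro H. split; [apply (Gam_thm_mp _ _ _ (ax_A1 a b)) | apply (Gam_thm_mp _ _ _ (ax_A2 a b))];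
      exact H.
  - intros [Ha Hb]. apply Gam_closed, deriv_and; apply d_hyp; assumption.
Qed.

Lemma Gam_or w a b : Gam w (Or a b) <-> Gam w a \/ Gam w b.
Proof.
  split; [apply Gam_prime |].
  intros [H | H]; [apply (Gam_thm_mp _ _ _ (ax_O1 a b)) | apply (Gam_thm_mp _ _ _ (ax_O2 a b))];
    exact H.
Qed.

Lemma Gam_neg_and w a b : Gam w (Neg (And a b)) <-> Gam w (Neg a) \/ Gam w (Neg b).
Proof. rewrite (Gam_iff w _ _ (ax_NAnd a b)). apply Gam_or. Qed.

Lemma Gam_neg_or w a b : Gam w (Neg (Or a b)) <-> Gam w (Neg a) /\ Gam w (Neg b).
Proof. rewrite (Gam_iff w _ _ (ax_NOr a b)). apply Gam_and. Qed.

Lemma Gam_neg_imp w a b : Gam w (Neg (Imp a b)) <-> Gam w a /\ Gam w (Neg b).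
Proof. rewrite (Gam_iff w _ _ (ax_NImp a b)). apply Gam_and. Qed.

Lemma Gam_neg_neg w a : Gam w (Neg (Neg a)) <-> Gam w a.
Proof. exact (Gam_iff w _ _ (ax_NN a)). Qed.

Fixpoint code (p : form) : nat :=
  match p with
  | Var n => to_nat (0, n)
  | And a b => to_nat (1, to_nat (code a, code b))
  | Or a b => to_nat (2, to_nat (code a, code b))
  | Imp a b => to_nat (3, to_nat (code a, code b))
  | Neg a => to_nat (4, code a)
  | Cond a b => to_nat (5, to_nat (code a, code b))
  end.

Lemma to_nat_inj x y : to_nat x = to_nat y -> x = y.
Proof. intro H. rewrite <- (cancel_of_to x), <- (cancel_of_to y), H. reflexivity. Qed.

Lemma code_inj p q : code p = code q -> p = q.
Proof.
  revert q; induction p as [n | a IHa b IHb | a IHa b IHb | a IHa b IHb | a IHa | a IHa b IHb];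
    intros [m | c d | c d | c d | c | c d] H; cbn [code] in H; apply to_nat_inj in H;
    try discriminate H; apply (f_equal snd) in H; cbn [snd] in H;
    try (apply to_nat_inj in H; injection H as H H');
    f_equal; auto.
Qed.

(* An arbitrary formula when n is not a code; Lindenbaum's construction
   merely re-decides that formula. *)
Definition decode (n : nat) : form := epsilon (inhabits (Var 0)) (fun p => code p = n).

Lemma decode_code p : decode (code p) = p.
Proof.
  apply code_inj, (epsilon_spec (inhabits (Var 0)) (fun q => code q = code p)).
  exists p; reflexivity.
Qed.

Definition increasing (C : nat -> form -> Prop) : Prop :=
  forall n m, n <= m -> forall p, C n p -> C m p.

Lemma increasing_of_step C : (forall n p, C n p -> C (S n) p) -> increasing C.
Proof. intros Hs n m Hnm; induction Hnm; auto. Qed.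

Lemma deriv_chain C p :
  increasing C -> deriv (fun q => exists n, C n q) p -> exists n, deriv (C n) p.
Proof.
  intro HC; induction 1 as [p [n Hn] | p Hp | p q _ [n1 H1] _ [n2 H2]].
  - exists n; apply d_hyp, Hn.
  - exists 0; apply d_thm, Hp.
  - exists (max n1 n2).
    apply (d_mp _ p); [revert H1 | revert H2]; apply deriv_mono, HC; lia.
Qed.

Lemma list_chain C l :
  increasing C -> (forall y, In y l -> exists n, C n y) -> exists n, forall y, In y l -> C n y.
Proof.
  intro HC; induction l as [| a l IH]; intro Hl.
  - exists 0; intros _ [].
  - destruct IH as [n1 H1]; [intros; apply Hl; right; auto |].
    destruct (Hl a (or_introl eq_refl)) as [n2 H2].
    exists (max n1 n2). intros y [<- | Hy].
    + revert H2; apply HC; lia.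
    + apply H1 in Hy. revert Hy; apply HC; lia.
Qed.

Definition biset := ((form -> Prop) * (form -> Prop))%type.

Definition extend (s : biset) (e : form) : biset :=
  if excluded_middle_informative (seq_deriv (fun q => fst s q \/ q = e) (snd s))
  then (fst s, fun q => snd s q \/ q = e)
  else (fun q => fst s q \/ q = e, snd s).

Lemma extend_consistent s e :
  ~ seq_deriv (fst s) (snd s) -> ~ seq_deriv (fst (extend s e)) (snd (extend s e)).
Proof.
  unfold extend; destruct excluded_middle_informative as [Hc | Hc]; simpl; auto.
  intros Hs Hs'. exact (Hs (seq_deriv_cut _ _ _ Hc Hs')).
Qed.

Lemma extend_incl s e :
  (forall p, fst s p -> fst (extend s e) p) /\ (forall p, snd s p -> snd (extend s e) p).
Proof. unfold extend; destruct excluded_middle_informative; simpl; auto. Qed.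

Lemma extend_decides s e : fst (extend s e) e \/ snd (extend s e) e.
Proof. unfold extend; destruct excluded_middle_informative; simpl; auto. Qed.

Section Lindenbaum.
Variables G0 D0 : form -> Prop.

Fixpoint stage (n : nat) : biset :=
  match n with
  | 0 => (G0, D0)
  | S n => extend (stage n) (decode n)
  end.

Lemma stage_fst_increasing : increasing (fun n => fst (stage n)).
Proof. apply increasing_of_step; intro n; apply extend_incl. Qed.

Lemma stage_snd_increasing : increasing (fun n => snd (stage n)).
Proof. apply increasing_of_step; intro n; apply extend_incl. Qed.

Lemma lindenbaum : ~ seq_deriv G0 D0 ->
  exists w : Wc, (forall p, G0 p -> Gam w p) /\ (forall p, D0 p -> ~ Gam w p).
Proof.
  intro H0.
  assert (Hcons : forall n, ~ seq_deriv (fst (stage n)) (snd (stage n))).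
  { induction n; [exact H0 | apply extend_consistent; assumption]. }
  set (G := fun q => exists n, fst (stage n) q).
  set (D := fun q => exists n, snd (stage n) q).
  assert (Hm : maximal (G, D)).
  { split; simpl.
    - intros [x [l [Hl Hd]]].
      destruct (deriv_chain _ _ stage_fst_increasing Hd) as [n1 H1].
      destruct (list_chain _ _ stage_snd_increasing Hl) as [n2 H2].
      apply (Hcons (max n1 n2)). exists x, l. split.
      + intros y Hy. apply H2 in Hy. revert Hy; apply stage_snd_increasing; lia.
      + revert H1; apply deriv_mono, stage_fst_increasing; lia.
    - intro p. rewrite <- (decode_code p).
      destruct (extend_decides (stage (code p)) (decode (code p)));
        [left | right]; exists (S (code p)); assumption. }
  exists (exist _ (G, D) Hm). split.
  - intros p Hp. exists 0. exact Hp.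
  - intros p Hp. apply (Del_iff_not_Gam (exist _ (G, D) Hm)). exists 0. exact Hp.
Qed.

End Lindenbaum.

Lemma thm_imp_complete x y : (forall w : Wc, Gam w x -> Gam w y) -> thm (Imp x y).
Proof.
  intro H. apply NNPP; intro Hn.
  assert (Hc : ~ seq_deriv (fun p => p = x) (fun p => p = y)).
  { intro Hs. apply Hn, thm_imp_of_deriv, seq_deriv_single, Hs. }
  destruct (lindenbaum _ _ Hc) as [w [Hx Hy]].
  exact (Hy y eq_refl (H w (Hx x eq_refl))).
Qed.

Lemma Gam_imp w a b : Gam w (Imp a b) <-> forall v, lec w v -> Gam v a -> Gam v b.
Proof.
  split.
  - intros H v Hwv Ha. exact (Gam_mp v a b (Hwv _ H) Ha).
  - intro H. apply NNPP; intro Hn.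
    assert (Hc : ~ seq_deriv (fun q => Gam w q \/ q = a) (fun q => q = b)).
    { intro Hs. apply Hn, Gam_closed, deriv_deduction, seq_deriv_single, Hs. }
    destruct (lindenbaum _ _ Hc) as [v [Hv1 Hv2]].
    apply (Hv2 b eq_refl), H; [intros q Hq | ]; apply Hv1; auto.
Qed.

Lemma thm_SIff_intro X Y :
  thm (Imp X Y) -> thm (Imp Y X) -> thm (Imp (Neg X) (Neg Y)) -> thm (Imp (Neg Y) (Neg X)) ->
  thm (SIff X Y).
Proof. intros. repeat apply thm_and; assumption. Qed.

Lemma thm_SIff_elim X Y : thm (SIff X Y) ->
  thm (Imp X Y) /\ thm (Imp Y X) /\ thm (Imp (Neg X) (Neg Y)) /\ thm (Imp (Neg Y) (Neg X)).
Proof.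
  intro H. destruct (thm_and_elim _ _ H) as [H1 H2].
  destruct (thm_and_elim _ _ H1), (thm_and_elim _ _ H2). tauto.
Qed.

Lemma cond_mono a q r : thm (Imp q r) -> thm (Imp (Cond a q) (Cond a r)).
Proof.
  intro H.
  assert (Hq : thm (Iff q (And q r))).
  { apply thm_and; [| apply ax_A1]. apply thm_imp_of_deriv.
    apply deriv_and; [| apply (deriv_thm_mp _ _ _ H)]; apply d_hyp; reflexivity. }
  destruct (thm_and_elim _ _ (r_RC _ _ a Hq)) as [Hqr _].
  destruct (thm_SIff_elim _ _ (ax_C1 a q r)) as (_ & HC1 & _).
  exact (thm_trans _ _ _ Hqr (thm_trans _ _ _ HC1 (ax_A2 _ _))).
Qed.

Lemma neg_cond_mono a q r :
  thm (Imp (Neg q) (Neg r)) -> thm (Imp (Neg (Cond a q)) (Neg (Cond a r))).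
Proof.
  intro H. destruct (thm_and_elim _ _ (ax_NAnd q r)) as [HNA HNA'].
  assert (Hqr : thm (Iff (Neg (And q r)) (Neg r))).
  { apply thm_and.
    - apply thm_of_deriv_empty. apply (deriv_imp_trans _ _ _ _ (d_thm _ _ HNA)).
      apply deriv_or_elim; apply d_thm; [exact H | apply thm_id].
    - exact (thm_trans _ _ _ (ax_O2 _ _) HNA'). }
  destruct (thm_and_elim _ _ (r_RCN _ _ a Hqr)) as [Hqr' _].
  destruct (thm_SIff_elim _ _ (ax_C1 a q r)) as (_ & _ & HC1 & _).
  destruct (thm_and_elim _ _ (ax_NAnd (Cond a q) (Cond a r))) as [_ HNC].
  exact (thm_trans _ _ _ (thm_trans _ _ _ (ax_O1 _ _) HNC) (thm_trans _ _ _ HC1 Hqr')).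
Qed.

Lemma dia_neg_cond a q : thm (Imp (Dia a (Neg q)) (Neg (Cond a q))).
Proof. exact (proj1 (thm_and_elim _ _ (r_RCN _ _ a (ax_NN (Neg q))))). Qed.

Lemma thm_neg_or_neg_imp b q : thm (Imp (Neg (Or b (Neg (Imp (Neg b) (Neg q))))) (Neg q)).
Proof.
  apply thm_imp_of_deriv.
  assert (H : deriv (fun p => p = Neg (Or b (Neg (Imp (Neg b) (Neg q)))))
                (And (Neg b) (Neg (Neg (Imp (Neg b) (Neg q)))))).
  { apply (deriv_thm_mp _ _ _ (proj1 (thm_and_elim _ _ (ax_NOr _ _)))), d_hyp; reflexivity. }
  apply (d_mp _ (Neg b)).
  - apply (deriv_thm_mp _ _ _ (proj1 (thm_and_elim _ _ (ax_NN _)))).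
    exact (deriv_thm_mp _ _ _ (ax_A2 _ _) H).
  - exact (deriv_thm_mp _ _ _ (ax_A1 _ _) H).
Qed.

Lemma Gam_cond_closed w a p : deriv (fun q => Gam w (Cond a q)) p -> Gam w (Cond a p).
Proof.
  induction 1 as [p Hp | p Hp | p q _ IH1 _ IH2]; auto.
  - apply (Gam_thm_mp w (Cond a (Imp p p))), Gam_thm, ax_C4.
    apply cond_mono, (r_MP _ _ (ax_K p (Imp p p)) Hp).
  - apply (Gam_thm_mp w (Cond a (And (Imp p q) p))).
    + apply cond_mono, thm_imp_of_deriv.
      apply (d_mp _ p);
        [apply (deriv_thm_mp _ _ _ (ax_A1 _ p)) | apply (deriv_thm_mp _ _ _ (ax_A2 (Imp p q) _))];
        apply d_hyp; reflexivity.
    + destruct (thm_SIff_elim _ _ (ax_C1 a (Imp p q) p)) as [HC1 _].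
      apply (Gam_thm_mp _ _ _ HC1), Gam_and; auto.
Qed.

Definition Rc_formula (v : Wc) (a : form) (u : Wc) : Prop :=
  (forall q, Gam v (Cond a q) -> Gam u q) /\
  (forall q, Gam u (Neg q) -> Gam v (Neg (Cond a q))).

Lemma Rc_iff_formula a (X Y : Wc -> Prop) :
  (forall w, X w <-> Gam w a) -> (forall w, Y w <-> Gam w (Neg a)) ->
  forall v u, Rc v (X, Y) u <-> Rc_formula v a u.
Proof.
  intros HX HY v u. split.
  - intros [p [Hp [Hnp [Hfw Hbw]]]]; simpl in Hp, Hnp.
    assert (Hap : thm (SIff a p)).
    { apply thm_SIff_intro; apply thm_imp_complete; intros w0 H.
      - apply Hp, HX, H.
      - apply HX, Hp, H.
      - apply Hnp, HY, H.
      - apply HY, Hnp, H. }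
    split; intros q Hq; destruct (thm_SIff_elim _ _ (r_RA a p q Hap)) as (Hi & _ & _ & Hn).
    + exact (Hfw q (Gam_thm_mp _ _ _ Hi Hq)).
    + exact (Gam_thm_mp _ _ _ Hn (Hbw q Hq)).
  - intros [Hfw Hbw]. exists a. simpl. auto.
Qed.

Lemma Gam_cond_transfer (w u : Wc) a :
  (forall q, Gam w (Cond a q) -> Gam u q) ->
  forall r, deriv (fun p => Gam w p \/ exists q, p = Neg (Cond a q) /\ Gam u (Neg q))
              (Cond a r) ->
  Gam u r.
Proof.
  intros Hwu r Hd.
  destruct (deriv_finite_support _ _ _ Hd) as [hs [Hhs Hd']]. clear Hd.
  revert r Hd'; induction hs as [| h hs IH]; intros r Hd.
  - apply Hwu, Gam_closed. revert Hd; apply deriv_mono; intros x [Hx | []]; exact Hx.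
  - destruct (Hhs h (or_introl eq_refl)) as [q [-> Hq]].
    (* the hypothesis ~(a []-> q) follows from a <>-> ~q, which C3 moves inside *)
    assert (Hd' : deriv (fun p => Gam w p \/ In p hs) (Cond a (Imp (Neg q) r))).
    { apply (deriv_thm_mp _ _ _ (ax_C3 a (Neg q) r)).
      apply (deriv_imp_trans _ _ _ _ (d_thm _ _ (dia_neg_cond a q))), deriv_deduction.
      revert Hd; apply deriv_mono; simpl; intros x [Hx | [<- | Hx]]; auto. }
    apply IH in Hd'; [exact (Gam_mp _ _ _ Hd' Hq) | intros; apply Hhs; right; auto].
Qed.

Lemma not_Gam_cond_witness w a b : ~ Gam w (Cond a b) ->
  exists v u, lec w v /\ Rc_formula v a u /\ ~ Gam u b.
Proof.
  intro Hn.
  assert (Hu : ~ seq_deriv (fun q => Gam w (Cond a q)) (fun q => q = b)).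
  { intro Hs. apply Hn, Gam_cond_closed, seq_deriv_single, Hs. }
  destruct (lindenbaum _ _ Hu) as [u [Hwu Hub]].
  set (D := fun y => exists r, y = Cond a r /\ ~ Gam u r).
  assert (HD : or_directed D).
  { intros y1 y2 [r1 [-> H1]] [r2 [-> H2]]. exists (Cond a (Or r1 r2)). split.
    - exists (Or r1 r2). split; [reflexivity | intro H; apply Gam_prime in H; tauto].
    - apply thm_of_deriv_empty, deriv_or_elim; apply d_thm, cond_mono; apply ax_O1 || apply ax_O2. }
  assert (Hv : ~ seq_deriv (fun p => Gam w p \/ exists q, p = Neg (Cond a q) /\ Gam u (Neg q)) D).
  { intro Hs. destruct (seq_deriv_or_directed _ _ HD Hs) as [z [[r [-> Hr]] Hd]].
    exact (Hr (Gam_cond_transfer w u a Hwu r Hd)). }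
  destruct (lindenbaum _ _ Hv) as [v [Hv1 Hv2]].
  exists v, u. split; [| split; [split |]].
  - intros p Hp; apply Hv1; auto.
  - intros q Hq. apply NNPP; intro Hq'. exact (Hv2 _ (ex_intro _ q (conj eq_refl Hq')) Hq).
  - intros q Hq. apply Hv1. right. exists q; auto.
  - exact (Hub b eq_refl).
Qed.

Lemma Gam_neg_cond_witness w a b : Gam w (Neg (Cond a b)) ->
  exists u, Rc_formula w a u /\ Gam u (Neg b).
Proof.
  intro Hnb.
  set (D := fun y => exists q, y = Neg q /\ ~ Gam w (Neg (Cond a q))).
  assert (HD : or_directed D).
  { intros y1 y2 [q1 [-> H1]] [q2 [-> H2]]. exists (Neg (And q1 q2)). split.
    - exists (And q1 q2). split; [reflexivity |]. intro H.
      destruct (thm_SIff_elim _ _ (ax_C1 a q1 q2)) as (_ & _ & _ & HC1).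
      apply (Gam_thm_mp _ _ _ HC1), Gam_neg_and in H. tauto.
    - exact (proj2 (thm_and_elim _ _ (ax_NAnd q1 q2))). }
  assert (Hc : ~ seq_deriv (fun p => Gam w (Cond a p) \/ p = Neg b) D).
  { intro Hs. destruct (seq_deriv_or_directed _ _ HD Hs) as [z [[q [-> Hq]] Hd]].
    apply deriv_deduction, Gam_cond_closed in Hd.
    (* C2 with the consequent ~b -> ~q *)
    apply Hq, (Gam_thm_mp _ _ _ (neg_cond_mono a _ _ (thm_neg_or_neg_imp b q))).
    apply (Gam_thm_mp _ _ _ (ax_C2 a b _)), Gam_and; auto. }
  destruct (lindenbaum _ _ Hc) as [u [Hu1 Hu2]].
  exists u. split; [split |].
  - intros q Hq; apply Hu1; auto.
  - intros q Hq. apply NNPP; intro Hq'. exact (Hu2 _ (ex_intro _ q (conj eq_refl Hq')) Hq).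
  - apply Hu1; auto.
Qed.

Lemma Gam_cond w a b :
  Gam w (Cond a b) <-> forall v, lec w v -> forall u, Rc_formula v a u -> Gam u b.
Proof.
  split.
  - intros H v Hwv u [Hfw _]. apply Hfw, Hwv, H.
  - intro H. apply NNPP; intro Hn.
    destruct (not_Gam_cond_witness w a b Hn) as (v & u & Hwv & Hr & Hu).
    exact (Hu (H v Hwv u Hr)).
Qed.

Lemma Gam_neg_cond w a b :
  Gam w (Neg (Cond a b)) <-> exists u, Rc_formula w a u /\ Gam u (Neg b).
Proof.
  split; [apply Gam_neg_cond_witness |].
  intros [u [[_ Hbw] Hu]]. exact (Hbw b Hu).
Qed.

Theorem lemma11 : forall (p : form) (w : W Mc),
  (ver Mc p w <-> Gam w p) /\ (fal Mc p w <-> Gam w (Neg p)).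
Proof.
  induction p as [n | a IHa b IHb | a IHa b IHb | a IHa b IHb | a IHa | a IHa b IHb];
    intro w; simpl.
  - tauto.
  - rewrite Gam_and, Gam_neg_and, (proj1 (IHa w)), (proj1 (IHb w)),
      (proj2 (IHa w)), (proj2 (IHb w)).
    tauto.
  - rewrite Gam_or, Gam_neg_or, (proj1 (IHa w)), (proj1 (IHb w)),
      (proj2 (IHa w)), (proj2 (IHb w)).
    tauto.
  - rewrite Gam_imp, Gam_neg_imp, (proj1 (IHa w)), (proj2 (IHb w)).
    setoid_rewrite (fun v => proj1 (IHa v)). setoid_rewrite (fun v => proj1 (IHb v)).
    tauto.
  - rewrite Gam_neg_neg, (proj1 (IHa w)), (proj2 (IHa w)). tauto.
  - rewrite Gam_cond, Gam_neg_cond.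
    setoid_rewrite (Rc_iff_formula a _ _ (fun v => proj1 (IHa v)) (fun v => proj2 (IHa v))).
    setoid_rewrite (fun v => proj1 (IHb v)). setoid_rewrite (fun v => proj2 (IHb v)).
    tauto.
Qed.
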